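(* Let $X \subset \mathbb{Z}^2$ and let $V_1,\dots,V_n \subset X$ be thick convex digital disks. Let $X'=\bigcup_{i=1}^n V_i$. For each $i$ let $C_i$ be a bounding curve of $V_i$, let $B_{1,i}$ be the union of the maximal horizontal and maximal vertical line segments contained in $C_i$, and let $B_{2,i}$ be the set of endpoints of maximal slanted line segments contained in $C_i$. Then $$B=(X\setminus X')\cup\bigcup_{i=1}^n (B_{1,i}\cup B_{2,i})$$ is a freezing set for $(X,c_2)$.
   Context: Adjacencies: for $x\neq y$ in $\mathbb{Z}^2$, $x,y$ are $c_1$-adjacent if they differ by 1 in exactly one coordinate and agree in the other; $c_2$-adjacent if each coordinate differs by at most 1. Write $x\leftrightarrow_\kappa y$ for $\kappa$-adjacency. A $\kappa$-path is a finite sequence of points with consecutive points equal or $\kappa$-adjacent. A function $f:(X,\kappa)\to(X,\kappa)$ is $\kappa$-continuous ($f\in C(X,\kappa)$) if $x\leftrightarrow_\kappa x'$ implies $f(x)=f(x')$ or $f(x)\leftrightarrow_\kappa f(x')$. $\mathrm{Fix}(f)=\{x: f(x)=x\}$. A set $A\subset X$ is a freezing set for $(X,\kappa)$ if every $f\in C(X,\kappa)$ with $A\subset \mathrm{Fix}(f)$ satisfies $f=\mathrm{id}_X$. A (digital) line segment is a $c_2$-connected set of collinear points of $\mathbb{Z}^2$; it is necessarily horizontal, vertical, or of slope $\pm1$ (called slanted). A $c_2$-closed curve is a $c_2$-path $s_0,\dots,s_{m-1}$ with $s_0=s_{m-1}$ and $s_i\ne s_j$ for $0<|i-j|<m-1$.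 If $S$ is a $c_2$-closed curve such that $\mathbb{Z}^2\setminus S$ has exactly two $c_1$-components, one finite and one infinite, the union $D$ of $S$ and the finite component is a digital disk, $S$ is a bounding curve of $D$, and the finite component is the interior $Int(S)$ (also written $Int(X)$). $Bd_2(X)=\{x\in X : \exists y\in\mathbb{Z}^2\setminus X,\ y\leftrightarrow_{c_2}x\}$. A digital disk $X$ is thick if for some bounding curve $S$ of $X$: (i) for every slanted segment $T$ of $Bd_2(X)$ and every non-endpoint $p\in T$ there is $c\in X$ with $c\leftrightarrow_{c_2}p$ but $c$ not $c_1$-adjacent to $p$ (i.e. $c$ is diagonally adjacent to $p$) on the interior side; (ii) if $p$ is the vertex of a $90^\circ$ interior angle $\theta$ of $S$, there is $q\in Int(X)$ such that, if $\theta$ has horizontal and vertical sides, $q\leftrightarrow_{c_2}p$ and $q$ is not $c_1$-adjacent to $p$, and if $\theta$ has slanted sides, $q\leftrightarrow_{c_1}p$; (iii) if $p$ is the vertex of a $135^\circ$ interior angle $\theta$ of $S$, there are $b,b'\in X$ in the interior of $\theta$ with $b\leftrightarrow_{c_2}p$, $b$ not $c_1$-adjacent to $p$, and $b'\leftrightarrow_{c_1}p$. A set $X\subset\mathbb{Z}^2$ is (digitally) convex if $X$ equals the set of integer points of its Euclidean convex hull. *)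

From Stdlib Require Import Bool ZArith Reals List Lia Lra.
Open Scope Z_scope.

Definition pt := (Z * Z)%type.
Definition pset := pt -> Prop.

Definition subset (A B : pset) : Prop := forall z, A z -> B z.

Definition c1adj (x y : pt) : Prop :=
  Z.abs (fst x - fst y) + Z.abs (snd x - snd y) = 1.
Definition c2adj (x y : pt) : Prop :=
  x <> y /\ Z.abs (fst x - fst y) <= 1 /\ Z.abs (snd x - snd y) <= 1.

Inductive conn (adj : pt -> pt -> Prop) (A : pset) : pt -> pt -> Prop :=
| conn_refl x : A x -> conn adj A x x
| conn_step x y z : conn adj A x y -> (y = z \/ adj y z) -> A z -> conn adj A x z.

Definition finite_set (A : pset) : Prop := exists l : list pt, forall z, A z -> In z l.

Definition continuous2 (X : pset) (f : pt -> pt) : Prop :=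
  (forall x, X x -> X (f x)) /\
  (forall x y, X x -> X y -> c2adj x y -> f x = f y \/ c2adj (f x) (f y)).

Definition freezing_set (X A : pset) : Prop :=
  subset A X /\
  forall f : pt -> pt, continuous2 X f -> (forall a, A a -> f a = a) ->
    forall x, X x -> f x = x.

(* c2-closed curves, given as the list s_0, ..., s_{m-1} with s_0 = s_{m-1} *)
Definition dflt : pt := (0, 0).
Definition closed_curve (s : list pt) : Prop :=
  let m := length s in
  (1 <= m)%nat /\
  nth 0 s dflt = nth (m - 1) s dflt /\
  (forall i, (i + 1 < m)%nat ->
     nth i s dflt = nth (i + 1) s dflt \/ c2adj (nth i s dflt) (nth (i + 1) s dflt)) /\
  (forall i j, (i < m)%nat -> (j < m)%nat -> (i < j)%nat -> (j - i < m - 1)%nat ->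
     nth i s dflt <> nth j s dflt).

Definition curve_set (s : list pt) : pset := fun z => In z s.
Definition compl_curve (s : list pt) : pset := fun z => ~ In z s.

Definition Int (s : list pt) : pset :=
  fun z => compl_curve s z /\ finite_set (conn c1adj (compl_curve s) z).

Definition bounding_curve (D : pset) (s : list pt) : Prop :=
  closed_curve s /\
  (exists p q, compl_curve s p /\ compl_curve s q /\
     finite_set (conn c1adj (compl_curve s) p) /\
     ~ finite_set (conn c1adj (compl_curve s) q) /\
     forall z, compl_curve s z ->
       conn c1adj (compl_curve s) p z \/ conn c1adj (compl_curve s) q z) /\
  (forall z, D z <-> (curve_set s z \/ Int s z)).

Definition digital_disk (D : pset) : Prop := exists s, bounding_curve D s.

Definition Bd2 (X : pset) : pset :=
  fun x => X x /\ exists y, ~ X y /\ c2adj y x.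

Definition collinear (T : pset) : Prop :=
  exists a b c : Z, (a <> 0 \/ b <> 0) /\
    forall p, T p -> a * fst p + b * snd p = c.
Definition c2connected (T : pset) : Prop :=
  forall p q, T p -> T q -> conn c2adj T p q.
Definition segment (T : pset) : Prop := collinear T /\ c2connected T.
Definition two_points (T : pset) : Prop := exists p q, T p /\ T q /\ p <> q.

Definition horiz_seg (T : pset) : Prop :=
  segment T /\ two_points T /\ exists c, forall p, T p -> snd p = c.
Definition vert_seg (T : pset) : Prop :=
  segment T /\ two_points T /\ exists c, forall p, T p -> fst p = c.
Definition slanted_seg (T : pset) : Prop :=
  segment T /\ two_points T /\
  ((exists c, forall p, T p -> fst p - snd p = c) \/
   (exists c, forall p, T p -> fst p + snd p = c)).

Definition endpoint (T : pset) (p : pt) : Prop :=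
  T p /\ forall q r, T q -> T r -> c2adj p q -> c2adj p r -> q = r.

Definition maximal_in (K : pset -> Prop) (C T : pset) : Prop :=
  K T /\ subset T C /\ forall T', K T' -> subset T' C -> subset T T' -> subset T' T.

Definition B1 (s : list pt) : pset := fun z =>
  exists T, (maximal_in horiz_seg (curve_set s) T \/
             maximal_in vert_seg (curve_set s) T) /\ T z.
Definition B2 (s : list pt) : pset := fun z =>
  exists T, maximal_in slanted_seg (curve_set s) T /\ endpoint T z.

(* angles of a closed curve: directions indexed 0..7 (multiples of 45 degrees) *)
Definition dir (w : pt) : Z :=
  let (a, b) := w in
  if (a =? 1) && (b =? 0) then 0 else
  if (a =? 1) && (b =? 1) then 1 else
  if (a =? 0) && (b =? 1) then 2 else
  if (a =? -1) && (b =? 1) then 3 else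
  if (a =? -1) && (b =? 0) then 4 else
  if (a =? -1) && (b =? -1) then 5 else
  if (a =? 0) && (b =? -1) then 6 else
  if (a =? 1) && (b =? -1) then 7 else 8.
Definition dvec (k : Z) : pt :=
  match k mod 8 with
  | 0 => (1, 0) | 1 => (1, 1) | 2 => (0, 1) | 3 => (-1, 1)
  | 4 => (-1, 0) | 5 => (-1, -1) | 6 => (0, -1) | _ => (1, -1)
  end.
Definition addp (p q : pt) : pt := (fst p + fst q, snd p + snd q).
Definition subp (p q : pt) : pt := (fst p - fst q, snd p - snd q).

(* twice the signed (shoelace) area of the polygon s_0 ... s_{m-1} = s_0 *)
Fixpoint area2 (l : list pt) : Z :=
  match l with
  | a :: ((b :: _) as t) => (fst a * snd b - fst b * snd a) + area2 t
  | _ => 0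
  end.
Definition ccw (s : list pt) : bool := 0 <? area2 s.

(* the vertices are s_0 .. s_{n-1}, n = m - 1, indexed cyclically *)
Definition nv (s : list pt) : nat := (length s - 1)%nat.
Definition vtx (s : list pt) (i : nat) : pt := nth i s dflt.
Definition prevv (s : list pt) (i : nat) : pt := nth ((i + nv s - 1) mod nv s) s dflt.
Definition nextv (s : list pt) (i : nat) : pt := nth ((i + 1) mod nv s) s dflt.
Definition dir_prev (s : list pt) (i : nat) : Z := dir (subp (prevv s i) (vtx s i)).
Definition dir_next (s : list pt) (i : nat) : Z := dir (subp (nextv s i) (vtx s i)).

(* interior angle at vertex i, in units of 45 degrees: the interior lies to
   the left of a counterclockwise traversal. The interior angular sector is
   swept counterclockwise from direction [angle_start] through
   [angle_steps] steps. *)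
Definition angle_steps (s : list pt) (i : nat) : Z :=
  if ccw s then (dir_prev s i - dir_next s i) mod 8
  else (dir_next s i - dir_prev s i) mod 8.
Definition angle_start (s : list pt) (i : nat) : Z :=
  if ccw s then dir_next s i else dir_prev s i.
Definition in_angle (s : list pt) (i : nat) (w : pt) : Prop :=
  exists t, 0 < t < angle_steps s i /\ w = addp (vtx s i) (dvec (angle_start s i + t)).

Definition diag_adj (x y : pt) : Prop := c2adj x y /\ ~ c1adj x y.

Definition thick (X : pset) : Prop :=
  exists s, bounding_curve X s /\
  (forall T, slanted_seg T -> subset T (Bd2 X) ->
     forall p, T p -> ~ endpoint T p ->
       exists c, X c /\ diag_adj c p /\ ~ collinear (fun z => T z \/ z = c)) /\
  (forall i, (i < nv s)%nat -> angle_steps s i = 2 ->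
     exists q, Int s q /\
       (Z.even (dir_prev s i) = true -> diag_adj q (vtx s i)) /\
       (Z.even (dir_prev s i) = false -> c1adj q (vtx s i))) /\
  (forall i, (i < nv s)%nat -> angle_steps s i = 3 ->
     exists b b', X b /\ X b' /\ in_angle s i b /\ in_angle s i b' /\
       diag_adj b (vtx s i) /\ c1adj b' (vtx s i)).

Definition IZp (p : pt) : R * R := (IZR (fst p), IZR (snd p)).
Definition in_hull (X : pset) (z : R * R) : Prop :=
  exists l : list (R * pt),
    Forall (fun wp => (0 <= fst wp)%R /\ X (snd wp)) l /\
    fold_right (fun wp acc => fst wp + acc)%R 0%R l = 1%R /\
    fold_right (fun wp acc => fst wp * IZR (fst (snd wp)) + acc)%R 0%R l = fst z /\
    fold_right (fun wp acc => fst wp * IZR (snd (snd wp)) + acc)%R 0%R l = snd z.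
Definition convex (X : pset) : Prop := forall z : pt, X z <-> in_hull X (IZp z).

From Stdlib Require Import ZArith List Lia Classical.
Open Scope Z_scope.

(** Points of [X] outside every
    [V i] lie in [B]; for a point of some disk [V i] with bounding curve [s]:
    - A continuous [f] is 1-Lipschitz for the Chebyshev distance along rays
      inside [X].  So if the rays from [p] in directions [d] and [-d] both
      reach fixed points inside [X], every coordinate of [f p] in which [d]
      moves equals that of [p] ("pinning", [opposite_pins]).
    - A curve point has a curve neighbour [r].  If [r] is horizontally or
      vertically adjacent, [p] lies on a maximal horizontal/vertical segment of
      the curve, i.e. in [B1].  Otherwise walking from [p] along [r - p] and
      along [p - r] inside the curve ends at the two endpoints of a maximal
      slanted segment, which lie in [B2]; pinning fixes [p].
    - An interior point lies in a finite c1-component of the complement of the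
      curve, so the four axis rays from it hit the (now fixed) curve after
      running through the interior; pinning fixes it. *)

Lemma conn_last adj A x y : conn adj A x y -> A y.
Proof. now destruct 1. Qed.

Lemma conn_one adj (A : pset) x y : A x -> A y -> (x = y \/ adj x y) -> conn adj A x y.
Proof. intros Hx Hy Hxy; eapply conn_step; [apply conn_refl | ..]; eauto. Qed.

Lemma conn_trans adj A x y z : conn adj A x y -> conn adj A y z -> conn adj A x z.
Proof.
  intros Hxy Hyz; revert Hxy; induction Hyz as [y Hy | y w z _ IH Hwz Hz]; intros Hxy;
    [exact Hxy | eapply conn_step; [apply IH, Hxy | exact Hwz | exact Hz]].
Qed.

Lemma conn_sym adj A x y :
  (forall a b, adj a b -> adj b a) -> conn adj A x y -> conn adj A y x.
Proof.
  intros Hsym Hxy; induction Hxy as [x Hx | x y z Hxy IH Hyz Hz]; [now apply conn_refl|].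
  eapply conn_trans; [|exact IH].
  apply conn_one; [exact Hz | exact (conn_last _ _ _ _ Hxy) | destruct Hyz; auto].
Qed.

Lemma conn_mono adj (A A' : pset) x y :
  subset A A' -> conn adj A x y -> conn adj A' x y.
Proof. intros Hsub H; induction H; [apply conn_refl | eapply conn_step]; eauto. Qed.

Lemma c2adj_sym a b : c2adj a b -> c2adj b a.
Proof. unfold c2adj; intros [Hne Hab]; split; [congruence | lia]. Qed.

(** The component [comp A p] of [p] in [A] is the largest c2-connected subset of
    [A] containing [p]; this is what makes maximal segments explicit. *)
Definition comp (A : pset) (p : pt) : pset := conn c2adj A p.

Lemma comp_sub A p : subset (comp A p) A.
Proof. intros z Hz; eapply conn_last; eauto. Qed.

Lemma comp_c2connected A p : c2connected (comp A p).
Proof.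
  intros u v Hu Hv.
  assert (Huv : conn c2adj A u v)
    by (eapply conn_trans; [apply conn_sym; [exact c2adj_sym | exact Hu] | exact Hv]).
  clear Hv; revert Hu; induction Huv as [u Hu' | u v w Huv IH Hvw Hw]; intros Hu;
    [now apply conn_refl|].
  apply (conn_step _ _ _ v); [now apply IH | exact Hvw |].
  apply (conn_step _ _ _ v); [exact (conn_trans _ _ _ _ _ Hu Huv) | exact Hvw | exact Hw].
Qed.

Lemma comp_largest A p T : c2connected T -> T p -> subset T A -> subset T (comp A p).
Proof. intros HT Hp Hsub z Hz; exact (conn_mono _ _ _ _ _ Hsub (HT p z Hp Hz)). Qed.

Definition mv (p d : pt) (k : nat) : pt :=
  (fst p + Z.of_nat k * fst d, snd p + Z.of_nat k * snd d).
Definition opp (d : pt) : pt := (- fst d, - snd d).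

Definition c2step (d : pt) : Prop := d <> (0, 0) /\ Z.abs (fst d) <= 1 /\ Z.abs (snd d) <= 1.

Definition cheb (p q : pt) : Z := Z.max (Z.abs (fst p - fst q)) (Z.abs (snd p - snd q)).

Lemma mv0 p d : mv p d 0 = p.
Proof. destruct p; unfold mv; simpl; f_equal; lia. Qed.

Lemma mv_step p d k : c2step d -> c2adj (mv p d k) (mv p d (S k)).
Proof.
  destruct d as [a b]; intros (Hne & Ha & Hb); unfold c2adj, mv; cbn [fst snd] in *.
  rewrite Nat2Z.inj_succ, !Z.mul_succ_l; split; [|lia].
  intro E; injection E; intros; apply Hne; f_equal; lia.
Qed.

Lemma finite_ray_escape (A : pset) p d :
  finite_set A -> d <> (0, 0) -> exists k, ~ A (mv p d k).
Proof.
  intros [l Hl] Hd.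
  set (bnd := fold_right (fun z acc => cheb z p + acc) 0 l).
  assert (Hb : forall z, In z l -> 0 <= cheb z p <= bnd).
  { subst bnd; clear Hl; induction l as [|a l IH]; simpl; [tauto|].
    assert (0 <= fold_right (fun z acc => cheb z p + acc) 0 l)
      by (clear; induction l; simpl; unfold cheb in *; lia).
    unfold cheb in *; intros z [->|Hz]; [lia | specialize (IH z Hz); lia]. }
  exists (S (Z.to_nat bnd)); intros Hin; apply Hl, Hb in Hin.
  destruct p as [x y], d as [a b]; unfold cheb, mv in Hin; cbn [fst snd] in Hin.
  rewrite Nat2Z.inj_succ, Z2Nat.id in Hin by lia.
  assert (a <> 0 \/ b <> 0) by (destruct (Z.eq_dec a 0), (Z.eq_dec b 0); subst; auto).
  nia.
Qed.

Lemma first_exit (P : nat -> Prop) M : P 0%nat -> ~ P M ->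
  exists N, (forall k, (k <= N)%nat -> P k) /\ ~ P (S N).
Proof.
  intros H0 HM.
  assert (G : forall K, (forall k, (k <= K)%nat -> P k) \/
                       exists N, (forall k, (k <= N)%nat -> P k) /\ ~ P (S N)).
  { induction K as [|K [IH|IH]].
    - left; intros k Hk; now replace k with 0%nat by lia.
    - destruct (classic (P (S K))) as [HK|HK]; [left|right; eauto].
      intros k Hk; destruct (Nat.eq_dec k (S K)) as [->|]; [exact HK | apply IH; lia].
    - now right. }
  destruct (G M) as [HallM|]; auto; exfalso; apply HM, HallM; lia.
Qed.

Lemma ray_exit (A : pset) p d : finite_set A -> A p -> d <> (0, 0) ->
  exists N, (forall k, (k <= N)%nat -> A (mv p d k)) /\ ~ A (mv p d (S N)).
Proof.
  intros Hfin Hp Hd; destruct (finite_ray_escape A p d Hfin Hd) as [M HM].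
  apply (first_exit (fun k => A (mv p d k)) M); [now rewrite mv0 | exact HM].
Qed.

Section Pinning.
Variables (X : pset) (f : pt -> pt).
Hypothesis f_cont : continuous2 X f.

Lemma ray_lipschitz p d N : c2step d -> (forall k, (k <= N)%nat -> X (mv p d k)) ->
  cheb (f p) (f (mv p d N)) <= Z.of_nat N.
Proof.
  intros Hd HX; induction N as [|N IH].
  - rewrite mv0; unfold cheb; lia.
  - specialize (IH (fun k Hk => HX k (Nat.le_le_succ_r _ _ Hk))).
    destruct (proj2 f_cont _ _ (HX N (Nat.le_succ_diag_r N)) (HX (S N) (le_n _))
                (mv_step p d N Hd)) as [E|E];
      [rewrite <- E | unfold c2adj in E]; unfold cheb in *; lia.
Qed.

Definition ray_pinned (p d : pt) : Prop :=
  exists N, (forall k, (k <= N)%nat -> X (mv p d k)) /\ f (mv p d N) = mv p d N.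

Lemma pinned_cheb p d : c2step d -> ray_pinned p d ->
  exists N, cheb (f p) (mv p d N) <= Z.of_nat N.
Proof.
  intros Hd [N [HX Hfix]]; exists N; rewrite <- Hfix.
  now apply ray_lipschitz.
Qed.

Lemma c2step_opp d : c2step d -> c2step (opp d).
Proof.
  destruct d as [a b]; unfold c2step, opp; cbn [fst snd]; intros (Hne & Ha & Hb).
  split; [|lia]; intro E; injection E; intros; apply Hne; f_equal; lia.
Qed.

Lemma opposite_pins p d : c2step d -> ray_pinned p d -> ray_pinned p (opp d) ->
  (Z.abs (fst d) = 1 -> fst (f p) = fst p) /\ (Z.abs (snd d) = 1 -> snd (f p) = snd p).
Proof.
  intros Hd Hpin Hpin'.
  destruct (pinned_cheb p d Hd Hpin) as [N HN].
  destruct (pinned_cheb p (opp d) (c2step_opp d Hd) Hpin') as [M HM].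
  destruct p as [x y], d as [a b], (f (x, y)) as [u v].
  unfold cheb, mv, opp in *; cbn [fst snd] in *.
  split; intros Hab; nia.
Qed.

End Pinning.

Definition line (a b c : Z) : pset := fun z => a * fst z + b * snd z = c.

Definition line_comp (C : pset) (a b c : Z) (p : pt) : pset :=
  comp (fun z => C z /\ line a b c z) p.

Lemma line_comp_on_line C a b c p : subset (line_comp C a b c p) (line a b c).
Proof. intros z Hz; exact (proj2 (comp_sub _ _ z Hz)). Qed.

Lemma line_comp_segment C a b c p q :
  (a <> 0 \/ b <> 0) -> C p -> C q -> line a b c p -> line a b c q -> c2adj p q ->
  segment (line_comp C a b c p) /\ two_points (line_comp C a b c p).
Proof.
  intros Hab Cp Cq Lp Lq Hpq; split; [split|].
  - exists a, b, c; split; [exact Hab | apply line_comp_on_line].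
  - apply comp_c2connected.
  - exists p, q; split; [now apply conn_refl|].
    split; [apply conn_one; auto | destruct Hpq; auto].
Qed.

Lemma line_comp_maximal (K : pset -> Prop) C a b c p q :
  C p -> C q -> line a b c p -> line a b c q -> c2adj p q ->
  K (line_comp C a b c p) ->
  (forall T, K T -> c2connected T) ->
  (forall T, K T -> T p -> T q -> subset T (line a b c)) ->
  maximal_in K C (line_comp C a b c p).
Proof.
  intros Cp Cq Lp Lq Hpq HK Hconn Hline.
  assert (Tp : line_comp C a b c p p) by now apply conn_refl.
  assert (Tq : line_comp C a b c p q) by (apply conn_one; auto; now right).
  split; [exact HK | split].
  - intros z Hz; exact (proj1 (comp_sub _ _ z Hz)).
  - intros T' HK' Hsub Hsup; apply comp_largest; auto.
    intros z Hz; split; [now apply Hsub | now apply (Hline T'); auto].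
Qed.

Lemma B1_of_aligned s p r : In p s -> In r s -> c2adj p r ->
  fst r = fst p \/ snd r = snd p -> B1 s p.
Proof.
  intros Hp Hr Hpr [E|E].
  - assert (Lp : line 1 0 (fst p) p) by (unfold line; lia).
    assert (Lr : line 1 0 (fst p) r) by (unfold line; lia).
    destruct (line_comp_segment (curve_set s) 1 0 (fst p) p r) as [Hseg H2]; auto; [lia|].
    exists (line_comp (curve_set s) 1 0 (fst p) p); split; [right|now apply conn_refl].
    apply line_comp_maximal with r; auto.
    + split; [exact Hseg | split; [exact H2|]]; exists (fst p).
      intros z Hz; apply line_comp_on_line in Hz; unfold line in Hz; lia.
    + intros T HT; exact (proj2 (proj1 HT)).
    + intros T (_ & _ & [c0 Hc0]) Tp _ z Hz; unfold line.
      rewrite (Hc0 z Hz), <- (Hc0 p Tp); lia.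
  - assert (Lp : line 0 1 (snd p) p) by (unfold line; lia).
    assert (Lr : line 0 1 (snd p) r) by (unfold line; lia).
    destruct (line_comp_segment (curve_set s) 0 1 (snd p) p r) as [Hseg H2]; auto; [lia|].
    exists (line_comp (curve_set s) 0 1 (snd p) p); split; [left|now apply conn_refl].
    apply line_comp_maximal with r; auto.
    + split; [exact Hseg | split; [exact H2|]]; exists (snd p).
      intros z Hz; apply line_comp_on_line in Hz; unfold line in Hz; lia.
    + intros T HT; exact (proj2 (proj1 HT)).
    + intros T (_ & _ & [c0 Hc0]) Tp _ z Hz; unfold line.
      rewrite (Hc0 z Hz), <- (Hc0 p Tp); lia.
Qed.

Definition diag_step (e : pt) : Prop := Z.abs (fst e) = 1 /\ Z.abs (snd e) = 1.

Lemma diag_step_cases e : diag_step e ->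
  (fst e = 1 \/ fst e = -1) /\ (snd e = 1 \/ snd e = -1).
Proof. unfold diag_step; lia. Qed.

Lemma pt_neq (p q : pt) : p <> q -> fst p <> fst q \/ snd p <> snd q.
Proof.
  destruct p as [x y], q as [x' y']; cbn [fst snd]; intros Hne.
  destruct (Z.eq_dec x x'), (Z.eq_dec y y'); subst; auto.
Qed.

Definition dline (e p : pt) : pset :=
  line (snd e) (- fst e) (snd e * fst p - fst e * snd p).

Lemma diag_c2step e : diag_step e -> c2step e.
Proof.
  destruct e as [a b]; unfold diag_step, c2step; cbn [fst snd]; intros [Ha Hb].
  split; [intro E; injection E; lia | lia].
Qed.

Lemma dline_mv e p k : dline e p (mv p e k).
Proof. unfold dline, line, mv; cbn [fst snd]; ring. Qed.

Lemma B2_at_exit s p q e N : diag_step e -> In p s -> In q s -> c2adj p q -> dline e p q ->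
  (forall k, (k <= N)%nat -> In (mv p e k) s) -> ~ In (mv p e (S N)) s ->
  B2 s (mv p e N).
Proof.
  intros He Hp Hq Hpq Lq Hrun Hexit.
  set (c := snd e * fst p - fst e * snd p).
  set (T := line_comp (curve_set s) (snd e) (- fst e) c p).
  assert (Hab : snd e <> 0 \/ - fst e <> 0) by (destruct He; lia).
  assert (Lp : line (snd e) (- fst e) c p) by (unfold line; subst c; ring).
  destruct (line_comp_segment (curve_set s) (snd e) (- fst e) c p q) as [Hseg H2]; auto.
  exists T; split.
  - apply line_comp_maximal with q; auto.
    + split; [exact Hseg | split; [exact H2|]].
      destruct e as [a b], (diag_step_cases _ He) as [Ha Hb]; cbn [fst snd] in *.
      destruct (Z.eq_dec a b); [left; exists (a * c) | right; exists (b * c)];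
        intros z Hz; apply line_comp_on_line in Hz; unfold line in Hz;
        destruct Ha as [-> | ->], Hb as [-> | ->]; lia.
    + intros T' HT'; exact (proj2 (proj1 HT')).
    + intros T' (_ & _ & [[c0 Hc0]|[c0 Hc0]]) Tp Tq z Hz;
        pose proof (Hc0 z Hz); pose proof (Hc0 p Tp); pose proof (Hc0 q Tq);
        destruct Hpq as [Hne%pt_neq Hclose];
        unfold dline, line in *; subst c; destruct e as [a b], (diag_step_cases _ He) as [Ha Hb];
        cbn [fst snd] in *; destruct Ha as [-> | ->], Hb as [-> | ->]; lia.
  - assert (Hray : forall k, (k <= N)%nat -> T (mv p e k)).
    { induction k as [|k IH]; intros Hk; [rewrite mv0; now apply conn_refl|].
      eapply conn_step; [apply IH; lia | right; apply mv_step, diag_c2step, He |].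
      split; [apply Hrun; exact Hk | apply dline_mv]. }
    split; [now apply Hray|].
    assert (Hback : forall w, T w -> c2adj (mv p e N) w ->
                      w = (fst (mv p e N) - fst e, snd (mv p e N) - snd e)).
    { intros w Hw Hadj; destruct (comp_sub _ _ w Hw) as [Hin Hl].
      assert (Hnext : w <> mv p e (S N)) by (intros ->; contradiction).
      destruct Hadj as [Hne%pt_neq Hclose], (pt_neq _ _ Hnext) as [Hn|Hn];
      unfold dline, line, mv in *; subst c; rewrite Nat2Z.inj_succ in Hn;
        destruct w as [x y], e as [a b], (diag_step_cases _ He) as [Ha Hb];
        cbn [fst snd] in *; f_equal; destruct Ha as [-> | ->], Hb as [-> | ->]; lia. }
    intros q1 r1 Hq1 Hr1 Hq1a Hr1a; now rewrite (Hback q1 Hq1 Hq1a), (Hback r1 Hr1 Hr1a).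
Qed.

Lemma B1_in_curve s : subset (B1 s) (curve_set s).
Proof. intros z (T & [[_ [Hsub _]]|[_ [Hsub _]]] & Tz); exact (Hsub z Tz). Qed.

Lemma B2_in_curve s : subset (B2 s) (curve_set s).
Proof. intros z (T & [_ [Hsub _]] & [Tz _]); exact (Hsub z Tz). Qed.

Lemma curve_finite s : finite_set (curve_set s).
Proof. now exists s. Qed.

(** On a closed curve with at least two distinct points, every point has a
    c2-neighbour on the curve (its successor, cyclically). *)
Lemma curve_neighbour s p : closed_curve s -> (3 <= length s)%nat -> In p s ->
  exists r, In r s /\ c2adj p r.
Proof.
  intros (Hm & Hclose & Hadj & Hsimple) Hlen Hin.
  destruct (In_nth s p dflt Hin) as [i [Hi Hp]].
  destruct (Nat.lt_ge_cases (i + 1) (length s)) as [H|H].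
  - exists (nth (i + 1) s dflt); split; [apply nth_In; lia|].
    destruct (Hadj i H) as [E|E]; [|now subst].
    exfalso; apply (Hsimple i (i + 1)%nat); auto; lia.
  - replace i with (length s - 1)%nat in Hp by lia.
    exists (nth 1 s dflt); split; [apply nth_In; lia|].
    rewrite <- Hp, <- Hclose.
    destruct (Hadj 0%nat ltac:(lia)) as [E|E]; [|exact E].
    exfalso; apply (Hsimple 0%nat 1%nat); auto; lia.
Qed.

(** A bounding curve has at least two distinct points: the complement of a
    single point has no finite c1-component, as horizontal rays escape. *)
Lemma bounding_curve_length D s : bounding_curve D s -> (3 <= length s)%nat.
Proof.
  intros [Hc [(p & _ & Hp & _ & Hfin & _ & _) _]].
  destruct (Nat.lt_ge_cases (length s) 3) as [Hl|]; auto; exfalso.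
  assert (Hsingle : exists a, forall z, In z s -> z = a).
  { destruct Hc as (Hm & H0 & _); destruct s as [|a [|b [|c t]]]; simpl in *; try lia.
    - exists a; intros z [->|[]]; auto.
    - exists a; intros z [->|[->|[]]]; auto. }
  destruct Hsingle as [a Ha].
  assert (Hoff : forall z, snd z <> snd a -> compl_curve s z)
    by (intros z Hz Hin; apply Hz; now rewrite (Ha z Hin)).
  set (K := conn c1adj (compl_curve s) p).
  assert (Hp0 : exists p0, K p0 /\ snd p0 <> snd a).
  { destruct (Z.eq_dec (snd p) (snd a)) as [e|e]; [|exists p; split; auto; now apply conn_refl].
    exists (fst p, snd p + 1); split; [|simpl; lia].
    apply conn_one; auto; [apply Hoff; simpl; lia | right; unfold c1adj; simpl; lia]. }
  destruct Hp0 as [p0 [Kp0 Hy]].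
  destruct (finite_ray_escape K p0 (1, 0) Hfin ltac:(discriminate)) as [k Hk]; apply Hk.
  clear Hk; induction k as [|k IH]; [now rewrite mv0|].
  eapply conn_step; [exact IH | right | apply Hoff];
    unfold c1adj, mv; cbn [fst snd]; rewrite ?Nat2Z.inj_succ, ?Z.mul_succ_l; lia.
Qed.

Lemma Int_closed s y z : Int s y -> conn c1adj (compl_curve s) y z -> Int s z.
Proof.
  intros [_ [l Hl]] Hyz; split; [exact (conn_last _ _ _ _ Hyz)|].
  exists l; intros w Hw; apply Hl; eapply conn_trans; eauto.
Qed.

Section FixedDisk.
Variables (X : pset) (f : pt -> pt) (s : list pt).
Hypothesis f_cont : continuous2 X f.
Hypothesis curve_in_X : subset (curve_set s) X.

(** From a curve point, each direction along a slanted curve edge leads to the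
    endpoint of a maximal slanted segment, which is fixed when [B2] is. *)
Lemma curve_ray_pinned p q e : (forall z, B2 s z -> f z = z) ->
  diag_step e -> In p s -> In q s -> c2adj p q -> dline e p q -> ray_pinned X f p e.
Proof.
  intros HB2 He Hp Hq Hpq Lq.
  destruct (ray_exit (curve_set s) p e (curve_finite s) Hp (proj1 (diag_c2step e He)))
    as [N [Hrun Hexit]].
  exists N; split; [intros k Hk; now apply curve_in_X, Hrun|].
  apply HB2; now apply B2_at_exit with q.
Qed.

(** Fixing [B1] and [B2] fixes every point of the curve: a curve point either
    lies on a horizontal/vertical segment of the curve, or is pinned between
    the two ends of a maximal slanted segment. *)
Lemma curve_fixed : closed_curve s -> (3 <= length s)%nat ->
  (forall z, B1 s z -> f z = z) -> (forall z, B2 s z -> f z = z) ->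
  forall p, In p s -> f p = p.
Proof.
  intros Hc Hlen HB1 HB2 p Hp.
  destruct (curve_neighbour s p Hc Hlen Hp) as [r [Hr Hpr]].
  destruct (classic (fst r = fst p \/ snd r = snd p)) as [Haligned|Hslanted].
  { apply HB1; now apply B1_of_aligned with r. }
  set (e := subp r p).
  assert (He : diag_step e) by (unfold diag_step, e, subp, c2adj in *; cbn [fst snd]; lia).
  assert (Lr : dline e p r) by (unfold dline, line, e, subp; cbn [fst snd]; ring).
  assert (Lr' : dline (opp e) p r) by (unfold dline, line, opp, e, subp; cbn [fst snd]; ring).
  assert (He' : diag_step (opp e)) by (unfold diag_step, opp in *; cbn [fst snd]; lia).
  destruct (opposite_pins X f f_cont p e (diag_c2step e He)) as [Hx Hy];
    [now apply curve_ray_pinned with r .. |].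
  destruct p as [x y], (f (x, y)) as [u v] eqn:Efp; cbn [fst snd] in *.
  f_equal; [apply Hx | apply Hy]; apply He.
Qed.

Hypothesis interior_in_X : subset (Int s) X.
Hypothesis curve_pointwise_fixed : forall z, In z s -> f z = z.

Lemma interior_ray_pinned y d : Int s y -> Z.abs (fst d) + Z.abs (snd d) = 1 ->
  ray_pinned X f y d.
Proof.
  intros Hy Hd; set (K := conn c1adj (compl_curve s) y).
  assert (Hd0 : d <> (0, 0)) by (intros ->; simpl in Hd; lia).
  destruct (ray_exit K y d (proj2 Hy) ltac:(now apply conn_refl, Hy) Hd0)
    as [N [Hrun Hexit]].
  assert (Hstep : c1adj (mv y d N) (mv y d (S N))).
  { unfold c1adj, mv; cbn [fst snd]; rewrite Nat2Z.inj_succ, !Z.mul_succ_l; lia. }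
  assert (Hhit : In (mv y d (S N)) s).
  { apply NNPP; intro Hout; apply Hexit.
    eapply conn_step; [exact (Hrun N (le_n N)) | right; exact Hstep | exact Hout]. }
  exists (S N); split; [|now apply curve_pointwise_fixed].
  intros k Hk; destruct (Nat.eq_dec k (S N)) as [->|]; [now apply curve_in_X|].
  apply interior_in_X, (Int_closed s y); [exact Hy | apply Hrun; lia].
Qed.

(** Interior points are pinned horizontally and vertically by the curve. *)
Lemma interior_fixed y : Int s y -> f y = y.
Proof.
  intros Hy.
  assert (Hx : fst (f y) = fst y).
  { apply (opposite_pins X f f_cont y (1, 0)); [split; [discriminate|simpl; lia]| | |reflexivity];
      apply interior_ray_pinned; auto. }
  assert (Hy2 : snd (f y) = snd y).
  { apply (opposite_pins X f f_cont y (0, 1)); [split; [discriminate|simpl; lia]| | |reflexivity];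
      apply interior_ray_pinned; auto. }
  destruct y as [a b], (f (a, b)) as [u v]; cbn [fst snd] in *; now subst.
Qed.

End FixedDisk.

Lemma disk_fixed X f D s : continuous2 X f -> subset D X -> bounding_curve D s ->
  (forall z, B1 s z -> f z = z) -> (forall z, B2 s z -> f z = z) ->
  forall x, D x -> f x = x.
Proof.
  intros Hf HDX Hbc HB1 HB2 x Hx.
  pose proof (bounding_curve_length D s Hbc) as Hlen.
  destruct Hbc as [Hc [_ HD]].
  assert (HsX : subset (curve_set s) X) by (intros z Hz; apply HDX, HD; now left).
  assert (HIX : subset (Int s) X) by (intros z Hz; apply HDX, HD; now right).
  assert (Hcurve : forall z, In z s -> f z = z)
    by (apply (curve_fixed X f s Hf HsX Hc Hlen HB1 HB2)).
  destruct (proj1 (HD x) Hx) as [Hin|Hint]; [now apply Hcurve|].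
  now apply (interior_fixed X f s Hf HsX HIX Hcurve).
Qed.

Theorem mainTheorem5 (X : pset) (n : nat) (V : nat -> pset) (C : nat -> list pt) :
  (forall i, (i < n)%nat -> subset (V i) X) ->
  (forall i, (i < n)%nat -> digital_disk (V i) /\ thick (V i) /\ convex (V i)) ->
  (forall i, (i < n)%nat -> bounding_curve (V i) (C i)) ->
  freezing_set X
    (fun z => (X z /\ ~ (exists i, (i < n)%nat /\ V i z)) \/
              (exists i, (i < n)%nat /\ ((B1 (C i) z) \/ (B2 (C i) z)))).
Proof.
  intros HVX _ Hbc.
  assert (Hcurve_X : forall i z, (i < n)%nat -> In z (C i) -> X z)
    by (intros i z Hi Hz; apply (HVX i Hi), (proj2 (proj2 (Hbc i Hi))); now left).
  split.
  - intros z [[Hz _]|(i & Hi & [H1|H2])]; [exact Hz| |];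
      apply (Hcurve_X i z Hi); [now apply B1_in_curve | now apply B2_in_curve].
  - intros f Hf Hfix x Hx.
    destruct (classic (exists i, (i < n)%nat /\ V i x)) as [(i & Hi & Hxi)|Hout];
      [|apply Hfix; now left].
    apply (disk_fixed X f (V i) (C i) Hf (HVX i Hi) (Hbc i Hi)); [| |exact Hxi];
      intros z Hz; apply Hfix; right; exists i; auto.
Qed.
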